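(* Fix $\nu>1$ and $F>2$. Let $\gamma_{1,+}(\lambda,\eta)$ denote an eigenvalue of smallest real part of the matrix $G(+\infty;\lambda,\eta)$. Then $\Re\gamma_{1,+}(\lambda,\eta)$ is bounded from below on $\{(\lambda,\eta):\Re\lambda\ge0,\ \eta\in\mathbb{R}\}$.
   Context: Set $H=\nu^{-2}$, $Q=\nu^{-3}$, $s=\frac{\nu^2+\nu+1}{\nu(\nu+1)}$, and $A_1=\begin{pmatrix}-s&1&0\\ H/F^2-Q^2/H^2&2Q/H-s&0\\0&0&Q/H-s\end{pmatrix}$, $A_2=\begin{pmatrix}0&0&1\\0&0&Q/H\\ H/F^2&0&0\end{pmatrix}$, $E=\begin{pmatrix}0&0&0\\ 2Q^2/H^3+1&-2Q/H^2&0\\0&0&-Q/H^2\end{pmatrix}$ (here $A_1$ is invertible since $F\ne(\nu+1)/\nu^2$), and $G(+\infty;\lambda,\eta)=(E-\lambda I-i\eta A_2)A_1^{-1}$. This is the limiting matrix at the downstream endstate of a hydraulic shock of the inviscid Saint-Venant equations with Froude number $F$ and endstates $(1,1,0)$, $(\nu^{-2},\nu^{-3},0)$. *)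

From HB Require Import structures.
From mathcomp Require Import all_boot all_order all_algebra.
From mathcomp Require Import complex.
Set Implicit Arguments. Unset Strict Implicit. Unset Printing Implicit Defensive.
Import Order.TTheory GRing.Theory Num.Theory.
Local Open Scope ring_scope.

Section SV.
Variable R : rcfType.
Variables (nu F : R).

(* Downstream endstate and the auxiliary constant s. *)
Definition svH : R := nu ^-2.
Definition svQ : R := nu ^- 3.
Definition svs : R := (nu ^+ 2 + nu + 1) / (nu * (nu + 1)).

Definition svA1 : 'M[R]_3 :=
  \matrix_(i < 3, j < 3)
    match nat_of_ord i, nat_of_ord j with
    | 0, 0 => - svs
    | 0, 1 => 1
    | 1, 0 => svH / F ^+ 2 - svQ ^+ 2 / svH ^+ 2
    | 1, 1 => 2 * svQ / svH - svs
    | 2, 2 => svQ / svH - svs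
    | _, _ => 0
    end.

Definition svA2 : 'M[R]_3 :=
  \matrix_(i < 3, j < 3)
    match nat_of_ord i, nat_of_ord j with
    | 0, 2 => 1
    | 1, 2 => svQ / svH
    | 2, 0 => svH / F ^+ 2
    | _, _ => 0
    end.

Definition svE : 'M[R]_3 :=
  \matrix_(i < 3, j < 3)
    match nat_of_ord i, nat_of_ord j with
    | 1, 0 => 2 * svQ ^+ 2 / svH ^+ 3 + 1
    | 1, 1 => - (2 * svQ / svH ^+ 2)
    | 2, 2 => - (svQ / svH ^+ 2)
    | _, _ => 0
    end.

Local Notation toC := (fun x : R => x%:C%C).

Definition Gplus (lambda : R[i]) (eta : R) : 'M[R[i]]_3 :=
  (map_mx toC svE - lambda%:M - ('i%C * (eta%:C)%C) *: map_mx toC svA2)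
    *m invmx (map_mx toC svA1).

End SV.

(* Symmetrizer argument.  An eigenvalue gamma of G(+oo; lambda, eta) comes with a
   row vector v <> 0 solving v (E - lambda - i eta A2) = gamma v A1.  For a real
   positive semidefinite P such that A1 P and A2 P are symmetric, multiplying by
   P v^* and taking real parts kills the eta term and yields
     Re(v E P v^* ) - Re lambda (v P v^* ) = Re gamma (v A1 P v^* ).
   Here A1 P is negative definite, so -(v A1 P v^* ) >= mu |v|^2 with mu > 0, while
   Re(v E P v^* ) <= c |v|^2; since Re lambda >= 0 this forces Re gamma >= - c / mu
   for every eigenvalue, in particular for the one of smallest real part. *)

From HB Require Import structures.
From mathcomp Require Import all_boot all_order all_algebra.
From mathcomp Require Import complex.
From mathcomp Require Import ring lra.
Set Implicit Arguments. Unset Strict Implicit. Unset Printing Implicit Defensive.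
Import Order.TTheory GRing.Theory Num.Theory.
Local Open Scope ring_scope.

Lemma eigenvalue_pencil (F : fieldType) n (M A : 'M[F]_n) g :
    A \in unitmx -> eigenvalue (M *m invmx A) g ->
  exists2 v : 'rV_n, v != 0 & v *m M = g *: (v *m A).
Proof.
move=> uA /eigenvalueP [v vG v0]; exists v => //.
by rewrite -[v *m M](mulmxKV uA) -[v *m M *m _]mulmxA vG -scalemxAl.
Qed.

Section QuadraticForms.
Variables (R : rcfType) (n : nat).
Implicit Types (S : 'M[R]_n) (x : 'rV[R]_n) (v : 'rV[R[i]]_n).
Local Notation toC := (fun x : R => x%:C%C).

Definition qform S x : R := (x *m S *m x^T) 0 0.
Definition hform S v : R[i] := (v *m map_mx toC S *m (map_mx conjc v)^T) 0 0.

Lemma qformE S x : qform S x = \sum_i \sum_j x 0 i * S i j * x 0 j.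
Proof.
rewrite /qform mxE exchange_big; apply: eq_bigr => j _.
by rewrite !mxE mulr_suml; exact: eq_bigr.
Qed.

Lemma hformE S v : hform S v = \sum_i \sum_j v 0 i * (S i j)%:C%C * (v 0 j)^*%C.
Proof.
rewrite /hform mxE exchange_big; apply: eq_bigr => j _.
by rewrite !mxE mulr_suml; apply: eq_bigr => i _; rewrite !mxE.
Qed.

Lemma qform1 x : qform 1%:M x = \sum_i x 0 i ^+ 2.
Proof. by rewrite /qform mulmx1 mxE; apply: eq_bigr => i _; rewrite mxE expr2. Qed.

Lemma Re_sum I (r : seq I) (P : pred I) (F : I -> R[i]) :
  complex.Re (\sum_(i <- r | P i) F i) = \sum_(i <- r | P i) complex.Re (F i).
Proof. exact: (raddf_sum (@complex.Re R)). Qed.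

Lemma Im_sum I (r : seq I) (P : pred I) (F : I -> R[i]) :
  complex.Im (\sum_(i <- r | P i) F i) = \sum_(i <- r | P i) complex.Im (F i).
Proof. exact: (raddf_sum (@complex.Im R)). Qed.

Lemma ReM (z w : R[i]) :
  complex.Re (z * w) = complex.Re z * complex.Re w - complex.Im z * complex.Im w.
Proof. by case: z w => [a b] [c d]. Qed.

Local Notation re v := (map_mx (@complex.Re R) v).
Local Notation im v := (map_mx (@complex.Im R) v).

Lemma Re_hform S v : complex.Re (hform S v) = qform S (re v) + qform S (im v).
Proof.
rewrite hformE !qformE Re_sum -big_split; apply: eq_bigr => i _.
rewrite Re_sum -big_split; apply: eq_bigr => j _; rewrite !mxE.
by case: (v 0 i) (v 0 j) => [a b] [c d] /=; ring.
Qed.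

Lemma Im_hform S v : S^T = S -> complex.Im (hform S v) = 0.
Proof.
move=> symS; rewrite hformE Im_sum.
transitivity (\sum_i \sum_j S i j * (complex.Im (v 0 i) * complex.Re (v 0 j))
  - \sum_i \sum_j S i j * (complex.Re (v 0 i) * complex.Im (v 0 j))).
  rewrite -sumrB; apply: eq_bigr => i _; rewrite Im_sum -sumrB.
  apply: eq_bigr => j _; case: (v 0 i) (v 0 j) => [a b] [c d] /=.
  by rewrite !(mulr0, subr0, mul0r, add0r); ring.
rewrite [X in X - _]exchange_big /=; apply/eqP; rewrite subr_eq0; apply/eqP.
apply: eq_bigr => i _; apply: eq_bigr => j _.
by rewrite -[in LHS]symS mxE [complex.Im _ * _]mulrC.
Qed.

Lemma Re_hform_pencil (E A B P : 'M[R]_n) (lambda gamma : R[i]) (eta : R) v :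
    P^T = P -> (A *m P)^T = A *m P -> (B *m P)^T = B *m P ->
    v *m (map_mx toC E - lambda%:M - ('i%C * (eta%:C)%C) *: map_mx toC B)
      = gamma *: (v *m map_mx toC A) ->
  complex.Re (hform (E *m P) v) - complex.Re lambda * complex.Re (hform P v)
    = complex.Re gamma * complex.Re (hform (A *m P) v).
Proof.
set w := map_mx toC P *m (map_mx conjc v)^T.
have hformP : hform P v = (v *m w) 0 0 by rewrite /hform mulmxA.
have hformSP S : hform (S *m P) v = (v *m map_mx toC S *m w) 0 0.
  by rewrite /hform map_mxM !mulmxA.
move=> symP symAP symBP /(congr1 (fun M => (M *m w) 0 0)).
rewrite !mulmxBr !mulmxBl mul_mx_scalar -!scalemxAr -!scalemxAl.
have entryB (M1 M2 : 'M[R[i]]_1) : (M1 - M2) 0 0 = M1 0 0 - M2 0 0 by rewrite !mxE.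
have entryZ c (M : 'M[R[i]]_1) : (c *: M) 0 0 = c * M 0 0 by rewrite mxE.
rewrite !entryB !entryZ -!hformSP -hformP => /(congr1 (@complex.Re R)).
rewrite !raddfB /= !ReM (Im_hform v symP) (Im_hform v symAP) (Im_hform v symBP) /=.
by rewrite !(mulr0, mul0r, subr0, mul1r).
Qed.

Lemma qform1_ge0 x : 0 <= qform 1%:M x.
Proof. by rewrite qform1; apply: sumr_ge0 => i _; apply: sqr_ge0. Qed.

Lemma sqr_le_qform1 x i : x 0 i ^+ 2 <= qform 1%:M x.
Proof.
by rewrite qform1 (bigD1 i) //= lerDl; apply: sumr_ge0 => j _; apply: sqr_ge0.
Qed.

Lemma qform_le S x : qform S x <= (2 * \sum_i \sum_j `|S i j|) * qform 1%:M x.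
Proof.
rewrite qformE mulrAC mulr_sumr; apply: ler_sum => i _.
rewrite mulr_sumr; apply: ler_sum => j _.
have prod_le : `|x 0 i * x 0 j| <= x 0 i ^+ 2 + x 0 j ^+ 2.
  by rewrite ler_norml; apply/andP; split; nra.
have := sqr_le_qform1 x i; have := sqr_le_qform1 x j => hj hi.
apply: le_trans (ler_norm _) _.
have -> : `|x 0 i * S i j * x 0 j| = `|S i j| * `|x 0 i * x 0 j|.
  by rewrite !normrM; ring.
by rewrite [in X in _ <= X]mulrC; apply: ler_wpM2l; [exact: normr_ge0 | lra].
Qed.

Lemma qform1_gt0 x : x != 0 -> 0 < qform 1%:M x.
Proof.
move=> x0; rewrite lt_def qform1_ge0 andbT; apply: contra x0.
rewrite qform1 => /eqP /psumr_eq0P x2_0; apply/eqP/rowP => i.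
by rewrite mxE; apply/eqP; rewrite -sqrf_eq0 x2_0 // => j _; apply: sqr_ge0.
Qed.

Lemma qform1_Re_Im_gt0 v : v != 0 -> 0 < qform 1%:M (re v) + qform 1%:M (im v).
Proof.
move=> v0; have [re0 | /qform1_gt0 re_gt0] := eqVneq (re v) 0; last first.
  by apply: ltr_pwDl (qform1_ge0 _).
rewrite ltr_pwDr ?qform1_ge0 // qform1_gt0 //; apply: contra v0 => /eqP im0.
move/rowP: re0 => re0; move/rowP: im0 => im0; apply/eqP/rowP => i.
by move: (re0 i) (im0 i); rewrite !mxE; case: (v 0 i) => a b /= -> ->.
Qed.

Lemma coercive_unitmx (M : 'M[R]_n) mu :
  0 < mu -> (forall x, mu * qform 1%:M x <= - qform M x) -> M \in unitmx.
Proof.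
move=> mu_gt0 coerM; rewrite -row_free_unit -kermx_eq0.
apply/rowV0Pn => -[x /sub_kermxP xM0 x0].
have qM0 : qform M x = 0 by rewrite /qform xM0 mul0mx mxE.
by have := coerM x; rewrite qM0 oppr0 leNgt pmulr_rgt0 // qform1_gt0.
Qed.

Lemma symmetrizer_Re_eigenvalue_ge (E A B P : 'M[R]_n) (mu : R) :
    P^T = P -> (A *m P)^T = A *m P -> (B *m P)^T = B *m P ->
    (forall x, 0 <= qform P x) ->
    0 < mu -> (forall x, mu * qform 1%:M x <= - qform (A *m P) x) ->
  forall (lambda : R[i]) (eta : R) (gamma : R[i]),
    0 <= complex.Re lambda ->
    eigenvalue ((map_mx toC E - lambda%:M - ('i%C * (eta%:C)%C) *: map_mx toC B)
                *m invmx (map_mx toC A)) gamma ->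
  - (2 * \sum_i \sum_j `|(E *m P) i j|) / mu <= complex.Re gamma.
Proof.
move=> symP symAP symBP P_psd mu_gt0 AP_coercive lambda eta gamma Re_lambda_ge0 eig.
have uA : map_mx toC A \in unitmx.
  rewrite map_unitmx.
  by have := coercive_unitmx mu_gt0 AP_coercive; rewrite unitmx_mul => /andP[].
have [v v0 pencil] := eigenvalue_pencil uA eig.
have := Re_hform_pencil symP symAP symBP pencil; rewrite !Re_hform.
have := qform_le (E *m P) (re v); have := qform_le (E *m P) (im v).
have := AP_coercive (re v); have := AP_coercive (im v).
have := P_psd (re v); have := P_psd (im v).
have := qform1_Re_Im_gt0 v0.
set c := 2 * _.
have c_ge0 : 0 <= c by rewrite mulr_ge0 // sumr_ge0 // => i _; rewrite sumr_ge0.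
rewrite ler_pdivrMr //.
move: Re_lambda_ge0; set g := complex.Re gamma; set l := complex.Re lambda.
by case: (lerP 0 g) => g0; nra.
Qed.

End QuadraticForms.

Lemma binary_form_ge (R : realFieldType) (al be de z0 z1 : R) : 0 < al + de ->
  (al * de - be ^+ 2) / (al + de) * (z0 ^+ 2 + z1 ^+ 2)
    <= al * z0 ^+ 2 + 2 * be * z0 * z1 + de * z1 ^+ 2.
Proof.
move=> tr_gt0; rewrite mulrAC ler_pdivrMr // -subr_ge0.
have -> : (al * z0 ^+ 2 + 2 * be * z0 * z1 + de * z1 ^+ 2) * (al + de)
    - (al * de - be ^+ 2) * (z0 ^+ 2 + z1 ^+ 2)
    = (al * z0 + be * z1) ^+ 2 + (be * z0 + de * z1) ^+ 2 by ring.
by rewrite addr_ge0 ?sqr_ge0.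
Qed.

Section SaintVenant.
Variables (R : rcfType) (nu F : R).
Local Notation q := (svQ nu / svH nu).
Local Notation a := (svH nu / F ^+ 2).

Definition svP : 'M[R]_3 :=
  \matrix_(i < 3, j < 3)
    match nat_of_ord i, nat_of_ord j with
    | 0, 0 => 1
    | 0, 1 | 1, 0 => q
    | 1, 1 => a + q ^+ 2
    | 2, 2 => a
    | _, _ => 0
    end.

Lemma svP_sym : svP^T = svP.
Proof. by apply/matrixP => -[[|[|[|i]]] hi] -[[|[|[|j]]] hj]; rewrite !mxE. Qed.

Lemma svA1P_sym : (svA1 nu F *m svP)^T = svA1 nu F *m svP.
Proof.
apply/matrixP => -[[|[|[|i]]] hi] -[[|[|[|j]]] hj];
  rewrite !mxE !big_ord_recl !big_ord0 !mxE //= -?expr_div_n; ring.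
Qed.

Lemma svA2P_sym : (svA2 nu F *m svP)^T = svA2 nu F *m svP.
Proof.
apply/matrixP => -[[|[|[|i]]] hi] -[[|[|[|j]]] hj];
  rewrite !mxE !big_ord_recl !big_ord0 !mxE //=; ring.
Qed.

Lemma sv_a_ge0 : 0 <= a.
Proof. by rewrite /svH divr_ge0 ?invr_ge0 ?sqr_ge0. Qed.

Lemma svP_psd x : 0 <= qform svP x.
Proof.
rewrite qformE !big_ord_recl !big_ord0 !mxE /=.
set x0 := x 0 _; set x1 := x 0 _; set x2 := x 0 _.
have := sqr_ge0 (x0 + q * x1); have := sqr_ge0 x1; have := sqr_ge0 x2.
have := sv_a_ge0; nra.
Qed.

Local Notation b := (svs nu - q).

Lemma sv_coeff_bounds : 1 < nu -> 2 < F -> [/\ 0 < a, 0 < b & a < b ^+ 2].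
Proof.
move=> nu_gt1 F_gt2.
have nu0 : nu != 0 by rewrite gt_eqF //; lra.
have nu10 : nu + 1 != 0 by rewrite gt_eqF //; lra.
have F0 : F != 0 by rewrite gt_eqF //; lra.
have -> : b = nu / (nu + 1) by rewrite /svs /svQ /svH; field; rewrite nu0 nu10.
have -> : a = (nu ^+ 2 * F ^+ 2)^-1 by rewrite /svH; field; rewrite nu0 F0.
have nuF_gt : nu + 1 < nu ^+ 2 * F by nra.
split.
- by rewrite invr_gt0 mulr_gt0 ?exprn_gt0 //; lra.
- by rewrite divr_gt0 //; lra.
- rewrite -subr_gt0.
  have -> : (nu / (nu + 1)) ^+ 2 - (nu ^+ 2 * F ^+ 2)^-1
      = (nu ^+ 2 * F - (nu + 1)) * (nu ^+ 2 * F + (nu + 1))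
        / ((nu + 1) ^+ 2 * (nu ^+ 2 * F ^+ 2)).
    by field; rewrite nu0 nu10 F0.
  by rewrite divr_gt0 ?mulr_gt0 ?exprn_gt0 //; lra.
Qed.

Lemma svA1P_coercive : 1 < nu -> 2 < F ->
  exists2 mu, 0 < mu & forall x, mu * qform 1%:M x <= - qform (svA1 nu F *m svP) x.
Proof.
move=> nu_gt1 F_gt2; have [a_gt0 b_gt0 a_lt_b2] := sv_coeff_bounds nu_gt1 F_gt2.
set m := q * b - a; set n := a * (b - 2 * q) + q ^+ 2 * b.
have detE : b * n - m ^+ 2 = a * (b ^+ 2 - a) by rewrite /n /m; ring.
have det_gt0 : 0 < b * n - m ^+ 2 by rewrite detE mulr_gt0 // subr_gt0.
have tr_gt0 : 0 < b + n by nra.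
set mu1 := (b * n - m ^+ 2) / (b + n).
exists (Num.min mu1 (a * b)); first by rewrite lt_min (mulr_gt0 a_gt0 b_gt0) andbT divr_gt0.
move=> x; rewrite qform1 qformE !big_ord_recl !big_ord0 !mxE /=.
rewrite !big_ord_recl !big_ord0 !mxE /= -?expr_div_n.
set x0 := x 0 _; set x1 := x 0 _; set x2 := x 0 _.
(* [- qform (svA1 *m svP) x] is the binary form (b, m, n) in (x0, x1) plus [a b x2^2]. *)
have := binary_form_ge m x0 x1 tr_gt0; rewrite -/mu1.
have : Num.min mu1 (a * b) <= mu1 by rewrite ge_min lexx.
have : Num.min mu1 (a * b) <= a * b by rewrite ge_min lexx orbT.
have := sqr_ge0 x0; have := sqr_ge0 x1; have := sqr_ge0 x2.
rewrite /m /n; nra.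
Qed.

End SaintVenant.

Theorem mainTheorem4 (R : rcfType) (nu F : R) (hnu : 1 < nu) (hF : 2 < F) :
  exists C : R,
    forall (lambda : R[i]) (eta : R),
      0 <= complex.Re lambda ->
      forall gamma1 : R[i],
        eigenvalue (Gplus nu F lambda eta) gamma1 ->
        (forall gamma : R[i], eigenvalue (Gplus nu F lambda eta) gamma ->
            complex.Re gamma1 <= complex.Re gamma) ->
        C <= complex.Re gamma1.
Proof.
have [mu mu_gt0 A1P_coercive] := svA1P_coercive hnu hF.
exists (- (2 * \sum_i \sum_j `|(svE nu *m svP nu F) i j|) / mu).
move=> lambda eta Re_lambda_ge0 gamma1 eig _.
exact: (symmetrizer_Re_eigenvalue_ge (svP_sym nu F) (svA1P_sym nu F)
          (svA2P_sym nu F) (svP_psd nu F) mu_gt0 A1P_coercive Re_lambda_ge0 eig).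
Qed.
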